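(* Let $\alpha\neq0$, let $m$ be a positive integer and $u\in\{0,1,\dots,m\}$. Then $$\Lambda'(u|\mu)\,\Lambda'(u-1|\mu)\cdots\Lambda'(u-m+1|\mu)=(-\alpha)^{-m}\,\Delta_-^{u}\,(\mu_2-\mu_1z)^m\,\Delta_-^{m-u}$$ as operators on $\mathbb{C}[\mu_1,\mu_2][z]$.
   Context: $\mu_1,\mu_2$ are commuting indeterminates, commuting with $z$ and with $\Delta_\pm$; $z$ acts by multiplication; $[\Delta_\pm f](z)=\tfrac12\big(f(z+\alpha)\pm f(z-\alpha)\big)$ (acting in the variable $z$). For $u\in\mathbb{C}$, $\Lambda'(u|\mu)=-\alpha^{-1}\big[(\mu_2-\mu_1z)\Delta_--\alpha u\,\mu_1\Delta_+\big]$. *)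

(* C := R[i] for R : realType (the complex numbers);
   C[mu1,mu2] := {poly {poly C}} with mu1 = 'X%:P (inner variable), mu2 = 'X (outer);
   C[mu1,mu2][z] := {poly {poly {poly C}}}, z = 'X. *)
From HB Require Import structures.
From mathcomp Require Import all_boot all_order all_algebra.
From mathcomp Require Import complex.
From mathcomp Require Import reals.
Set Implicit Arguments. Unset Strict Implicit. Unset Printing Implicit Defensive.
Import Order.TTheory GRing.Theory Num.Theory.
Local Open Scope ring_scope.

Section Ops.
Variable R : realType.
Local Notation C := (R[i]).
Definition coefR := {poly {poly C}}.
Definition polR := {poly coefR}.

Definition cst (c : C) : polR := c%:P%:P%:P.
Definition mu1 : polR := ('X : {poly C})%:P%:P.
Definition mu2 : polR := ('X : coefR)%:P.
Definition zz : polR := 'X.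

Definition shift (a : C) (f : polR) : polR := f \Po ('X + cst a).

Definition DeltaP (alpha : C) (f : polR) : polR :=
  cst (2^-1) * (shift alpha f + shift (- alpha) f).
Definition DeltaM (alpha : C) (f : polR) : polR :=
  cst (2^-1) * (shift alpha f - shift (- alpha) f).

Definition LambdaP (alpha u : C) (f : polR) : polR :=
  - cst (alpha^-1) *
    ((mu2 - mu1 * zz) * DeltaM alpha f - cst (alpha * u) * mu1 * DeltaP alpha f).

Definition LambdaProd (alpha : C) (u : int) (m : nat) (f : polR) : polR :=
  foldr (fun k g => LambdaP alpha ((u - k%:Z)%:~R) g) f (iota 0 m).

End Ops.

From HB Require Import structures.
From mathcomp Require Import all_boot all_order all_algebra.
From mathcomp Require Import complex.
From mathcomp Require Import reals.
From mathcomp Require Import ring.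
Import Order.TTheory GRing.Theory Num.Theory.
Local Open Scope ring_scope.

(* Write A := mu2 - mu1 z.  The shifts fix the coefficients and send z to
   z +- alpha, so Delta_- obeys the Leibniz-type rule
     Delta_-^(n+1) (A h) = A Delta_-^(n+1) h - (n+1) alpha mu1 Delta_+ Delta_-^n h.
   Hence Lambda'(n+1) Delta_-^n = -alpha^-1 Delta_-^(n+1) A  and
   Delta_-^n Lambda'(-n) = -alpha^-1 A Delta_-^(n+1).  By induction on m, the
   new factor Lambda'(m) of the product for u = m is absorbed on the left, and
   for u < m the new factor Lambda'(u-m) is absorbed on the right. *)

Lemma foldr_ext (T U : Type) (F G : T -> U -> U) x s :
  F =2 G -> foldr F x s = foldr G x s.
Proof. by move=> eqFG; elim: s => //= k s ->. Qed.

Lemma foldr_iotaS (T : Type) (F : nat -> T -> T) x m :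
  foldr F x (iota 0 m.+1) = F 0%N (foldr (fun k => F k.+1) x (iota 0 m)).
Proof. by rewrite /= (iotaDl 1 0) foldr_map. Qed.

Section DifferenceOperators.
Variable R : realType.
Local Notation C := R[i].
Local Notation P := (polR R).
Local Notation A := (mu2 R - mu1 R * zz R).
Variable alpha : C.
Local Notation DM := (DeltaM alpha).
Local Notation DP := (DeltaP alpha).

Lemma cstD (a b : C) : cst (a + b) = cst a + cst b :> P.
Proof. by rewrite /cst !polyCD. Qed.

Lemma cstN (a : C) : cst (- a) = - cst a :> P.
Proof. by rewrite /cst !polyCN. Qed.

Lemma cstM (a b : C) : cst (a * b) = cst a * cst b :> P.
Proof. by rewrite /cst !polyCM. Qed.

Lemma shiftD a (f g : P) : shift a (f + g) = shift a f + shift a g.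
Proof. exact: comp_polyD. Qed.

Lemma shiftN a (f : P) : shift a (- f) = - shift a f.
Proof. exact: raddfN. Qed.

Lemma shiftM a (f g : P) : shift a (f * g) = shift a f * shift a g.
Proof. exact: comp_polyM. Qed.

Lemma shift_const a (p : P) : (size p <= 1)%N -> shift a p = p.
Proof. by move=> /size1_polyC ->; apply: comp_polyC. Qed.

Lemma shiftX a : shift a (zz R) = zz R + cst a.
Proof. exact: comp_polyX. Qed.

Lemma shift_comm a b (f : P) : shift a (shift b f) = shift b (shift a f).
Proof.
have shift_lin c d : ('X + cst c) \Po ('X + cst d) = 'X + cst d + cst c :> P.
  by rewrite comp_polyD comp_polyX comp_polyC.
by rewrite /shift -!comp_polyA !shift_lin addrAC.
Qed.

Lemma DeltaMD f g : DM (f + g) = DM f + DM g.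
Proof. by rewrite /DeltaM !shiftD opprD addrACA mulrDr. Qed.

Lemma DeltaMN f : DM (- f) = - DM f.
Proof. by rewrite /DeltaM !shiftN -opprD mulrN. Qed.

Lemma DeltaMB f g : DM (f - g) = DM f - DM g.
Proof. by rewrite DeltaMD DeltaMN. Qed.

Lemma DeltaMZ (p : P) f : (size p <= 1)%N -> DM (p * f) = p * DM f.
Proof.
by move=> p_const; rewrite /DeltaM !shiftM !(shift_const _ _ p_const) -mulrBr mulrCA.
Qed.

Lemma DeltaPZ (p : P) f : (size p <= 1)%N -> DP (p * f) = p * DP f.
Proof.
by move=> p_const; rewrite /DeltaP !shiftM !(shift_const _ _ p_const) -mulrDr mulrCA.
Qed.

Lemma DeltaMX f : DM (zz R * f) = zz R * DM f + cst alpha * DP f.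
Proof.
rewrite /DeltaM /DeltaP !shiftM !shiftX cstN.
(* [ring] is only fast once the shifted polynomials are abstracted. *)
move: (shift alpha f) (shift (- alpha) f) (cst alpha) (cst 2^-1) (zz R) => fp fm a h z.
ring.
Qed.

Lemma DeltaM_DeltaP f : DM (DP f) = DP (DM f).
Proof.
rewrite /DeltaM /DeltaP !shiftM !(shift_const _ _ (size_polyC_leq1 _)).
rewrite !shiftD !shiftN (shift_comm alpha).
by rewrite -!mulrBr -mulrDr addrKA addrA subrK.
Qed.

Lemma DeltaM_mulA f : DM (A * f) = A * DM f - cst alpha * mu1 R * DP f.
Proof.
rewrite mulrBl -[mu1 R * _ * f]mulrA DeltaMB.
rewrite [DM (mu2 R * _)]DeltaMZ ?size_polyC_leq1 // DeltaMZ ?size_polyC_leq1 // DeltaMX.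
move: (DM f) (DP f) => X Y.
ring.
Qed.

(* From now on the operators are used only through the lemmas above; opacity
   keeps unification from unfolding [DM f] into a product when rewriting. *)
#[local] Opaque shift DeltaM DeltaP.

Lemma iter_DeltaMD n f g : iter n DM (f + g) = iter n DM f + iter n DM g.
Proof. by elim: n => // n IH; rewrite !iterS IH DeltaMD. Qed.

Lemma iter_DeltaMN n f : iter n DM (- f) = - iter n DM f.
Proof. by elim: n => // n IH; rewrite !iterS IH DeltaMN. Qed.

Lemma iter_DeltaMZ n (p : P) f : (size p <= 1)%N -> iter n DM (p * f) = p * iter n DM f.
Proof. by move=> p_const; elim: n => // n IH; rewrite !iterS IH DeltaMZ. Qed.

Lemma iter_DeltaM_DeltaP n f : iter n DM (DP f) = DP (iter n DM f).
Proof. by elim: n => // n IH; rewrite !iterS IH DeltaM_DeltaP. Qed.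

Lemma iter_DeltaM_mulA n f :
  iter n.+1 DM (A * f) =
  A * iter n.+1 DM f - cst (alpha * n.+1%:R) * mu1 R * DP (iter n DM f).
Proof.
elim: n => [|n IH]; first by rewrite iterS DeltaM_mulA mulr1.
rewrite iterS IH DeltaMB -[cst _ * _ * DP _]mulrA.
rewrite [DM (cst _ * _)]DeltaMZ ?size_polyC_leq1 //.
rewrite [DM (mu1 R * _)]DeltaMZ ?size_polyC_leq1 // DeltaM_DeltaP -iterS.
rewrite DeltaM_mulA -iterS mulrA [n.+2%:R]mulrS mulrDr mulr1 cstD.
by move: (DP _) (A * _) => Y X; ring.
Qed.

Lemma LambdaPZ x (p : P) f :
  (size p <= 1)%N -> LambdaP alpha x (p * f) = p * LambdaP alpha x f.
Proof.
move=> p_const; rewrite /LambdaP DeltaMZ // DeltaPZ //.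
by move: (DM f) (DP f) (cst _) (cst _) => X Y a b; ring.
Qed.

Lemma LambdaP_iter_DeltaM n f :
  LambdaP alpha n.+1%:R (iter n DM f) = - cst alpha^-1 * iter n.+1 DM (A * f).
Proof. by rewrite iter_DeltaM_mulA. Qed.

Lemma iter_DeltaM_LambdaP n f :
  iter n DM (LambdaP alpha (- n%:R) f) = - cst alpha^-1 * (A * iter n.+1 DM f).
Proof.
rewrite /LambdaP mulrN cstN !mulNr opprK iter_DeltaMN.
rewrite iter_DeltaMZ ?size_polyC_leq1 // iter_DeltaMD -[cst _ * _ * _]mulrA.
rewrite [iter n DM (cst _ * _)]iter_DeltaMZ ?size_polyC_leq1 //.
rewrite [iter n DM (mu1 R * _)]iter_DeltaMZ ?size_polyC_leq1 //.
rewrite iter_DeltaM_DeltaP mulrA; congr (- (_ * _)).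
case: n => [|n]; first by rewrite mulr0 /cst !polyC0 !mul0r addr0.
by rewrite iter_DeltaM_mulA -[iter n DM (DM f)]iterSr -[iter n.+1 DM (DM f)]iterSr subrK.
Qed.

#[local] Opaque LambdaP.

Lemma LambdaProdSl u m f :
  LambdaProd alpha u m.+1 f = LambdaP alpha u%:~R (LambdaProd alpha (u - 1) m f).
Proof.
rewrite /LambdaProd [in LHS]foldr_iotaS subr0; congr LambdaP.
by apply: foldr_ext => k g; rewrite intS opprD addrA.
Qed.

Lemma LambdaProdSr u m f :
  LambdaProd alpha u m.+1 f = LambdaProd alpha u m (LambdaP alpha (u - m%:Z)%:~R f).
Proof. by rewrite /LambdaProd -addn1 iotaD foldr_cat. Qed.

Lemma cst_invN_exprS m :
  cst ((- alpha) ^- m) * cst (- alpha^-1) = cst ((- alpha) ^- m.+1) :> P.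
Proof. by rewrite -cstM exprSr invfM invrN. Qed.

Lemma LambdaProd_factor m u f : (u <= m)%N ->
  LambdaProd alpha u%:Z m f =
  cst ((- alpha) ^- m) * iter u DM (A ^+ m * iter (m - u) DM f).
Proof.
elim: m u f => [|m IH] u f.
  by rewrite leqn0 => /eqP ->; rewrite /cst expr0 invr1 !polyC1 !mul1r.
rewrite leq_eqVlt ltnS => /predU1P [-> | le_um].
  rewrite LambdaProdSl (_ : m.+1%:Z - 1 = m); last by rewrite intS addrAC subrr add0r.
  rewrite IH // subnn LambdaPZ ?size_polyC_leq1 //.
  rewrite -[m.+1%:~R]/(m.+1%:R) LambdaP_iter_DeltaM -cstN.
  by rewrite [cst _ * (_ * _)]mulrA cst_invN_exprS [A * _]mulrA -exprS subnn.
rewrite LambdaProdSr IH // -[Posz u - Posz m]opprB subzn // intrN.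
rewrite -[(m - u)%N%:~R]/((m - u)%N%:R) iter_DeltaM_LambdaP -cstN [A ^+ m * _]mulrCA.
rewrite [iter u DM (cst _ * _)]iter_DeltaMZ ?size_polyC_leq1 //.
by rewrite [cst _ * (_ * _)]mulrA cst_invN_exprS [A ^+ m * _]mulrA -exprSr subSn.
Qed.

End DifferenceOperators.

Theorem mainTheorem8 (R : realType) (alpha : R[i]) (m u : nat) :
  alpha != 0 -> (0 < m)%N -> (u <= m)%N ->
  forall f : polR R,
    LambdaProd alpha u%:Z m f =
    cst ((- alpha) ^- m) *
      iter u (DeltaM alpha) ((mu2 R - mu1 R * zz R) ^+ m * iter (m - u) (DeltaM alpha) f).
Proof. by move=> _ _ le_um f; apply: LambdaProd_factor. Qed.
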